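(* Let $\nu>-1$ and $p,q\in\mathbb{R}$. Then the inequalities $$(1-p)\mathcal{I}_{\nu+1}(x)+p\frac{\mathcal{I}_{\nu+1}(x)}{\mathcal{I}_{\nu}(x)}>1>(1-q)\mathcal{I}_{\nu+1}(x)+q\frac{\mathcal{I}_{\nu+1}(x)}{\mathcal{I}_{\nu}(x)}$$ hold for all $x\in(0,\infty)$ if and only if $p\leq\frac{\nu+1}{\nu+2}$ and $q\geq 1$.
   Context: For $\mu>-1$, $I_\mu(x)=\sum_{n\geq0}\frac{(x/2)^{\mu+2n}}{n!\,\Gamma(\mu+n+1)}$ is the modified Bessel function of the first kind, and $\mathcal{I}_\mu:\mathbb{R}\to[1,\infty)$ is the normalized modified Bessel function $$\mathcal{I}_{\mu}(x)=2^{\mu}\Gamma(\mu+1)x^{-\mu}I_{\mu}(x)=\sum_{n\geq0}\frac{(1/4)^n}{(\mu+1)_n\, n!}x^{2n},$$ where $(\mu+1)_n=\Gamma(\mu+n+1)/\Gamma(\mu+1)$ is the Pochhammer symbol. In particular $\mathcal{I}_{-1/2}(x)=\cosh x$ and $\mathcal{I}_{1/2}(x)=\frac{\sinh x}{x}$. *)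

From Stdlib Require Import Reals Lra ClassicalEpsilon Arith Factorial.
Open Scope R_scope.

Fixpoint poch (a : R) (n : nat) : R :=
  match n with
  | O => 1
  | S k => poch a k * (a + INR k)
  end.

(* n-th term of the series of the normalized modified Bessel function *)
Definition Inorm_term (mu x : R) (n : nat) : R :=
  (/ 4) ^ n / (poch (mu + 1) n * INR (fact n)) * x ^ (2 * n).

Definition Inorm (mu x : R) : R :=
  epsilon (inhabits 0) (fun l => infinite_sum (Inorm_term mu x) l).

(* With c = nu + 1 and t = x^2/4, Inorm nu x and Inorm (nu + 1) x are the sums G and F of the
   hypergeometric series 0F1(;c;t) and 0F1(;c+1;t).  The combination (1 - r) F + r F/G equals
   F - r F (G - 1)/G, so it decreases in r.  Comparing coefficients gives F < G, whence the value
   F/G < 1 at r = 1, and the contiguous inequality t F/c + (c + 1) F - c G > 1 + t/c (its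
   coefficients are (n^2 + c)/(c + n) times those of G), which together with G - 1 >= t/c puts
   the value at r = c/(c + 1) above 1.  Conversely, F >= 1 + t/(c + 1) is unbounded, which rules
   out q < 1; and F - 1 <= t F/(c + 1), G - 1 >= t/c and G (1 - t/c) <= 1 force the combination
   below 1 for small t as soon as p > c/(c + 1). *)

From Stdlib Require Import Reals Lra Lia Factorial FunctionalExtensionality ClassicalEpsilon.
Open Scope R_scope.

Lemma Un_cv_const (k : R) : Un_cv (fun _ => k) k.
Proof. intros eps Heps; exists O; intros; unfold Rdist; rewrite Rminus_diag, Rabs_R0; lra. Qed.

Lemma Un_cv_shift (u : nat -> R) (l : R) (N : nat) :
  Un_cv u l -> Un_cv (fun n => u (n + N)%nat) l.
Proof.
  intros Hu eps Heps; destruct (Hu eps Heps) as [M HM].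
  exists M; intros n Hn; apply HM; lia.
Qed.

Lemma infinite_sum_plus (a b : nat -> R) (A B : R) :
  infinite_sum a A -> infinite_sum b B ->
  infinite_sum (fun n => a n + b n) (A + B).
Proof.
  intros Ha Hb; apply (Un_cv_ext (fun n => sum_f_R0 a n + sum_f_R0 b n)).
  - intro n; symmetry; apply plus_sum.
  - now apply CV_plus.
Qed.

Lemma infinite_sum_scal (k : R) (a : nat -> R) (A : R) :
  infinite_sum a A -> infinite_sum (fun n => k * a n) (k * A).
Proof.
  intro Ha; apply (Un_cv_ext (fun n => k * sum_f_R0 a n)).
  - intro n; rewrite scal_sum; apply sum_eq; intros; ring.
  - now apply CV_mult; [apply Un_cv_const|].
Qed.

Lemma infinite_sum_cons (a0 : R) (a : nat -> R) (A : R) :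
  infinite_sum a A ->
  infinite_sum (fun n => match n with O => a0 | S k => a k end) (a0 + A).
Proof.
  intros Ha eps Heps; destruct (Ha eps Heps) as [M HM].
  assert (Hsum : forall n, sum_f_R0 (fun n => match n with O => a0 | S k => a k end) (S n)
                          = a0 + sum_f_R0 a n).
  { induction n as [|n IH]; [reflexivity|]. simpl in *; rewrite IH; ring. }
  exists (S M); intros [|n] Hn; [lia|].
  unfold Rdist; rewrite Hsum.
  replace (a0 + sum_f_R0 a n - (a0 + A)) with (sum_f_R0 a n - A) by ring.
  apply HM; lia.
Qed.

Lemma partial_sum_le_infinite_sum (a : nat -> R) (A : R) (N : nat) :
  infinite_sum a A -> (forall n, (N < n)%nat -> 0 <= a n) -> sum_f_R0 a N <= A.
Proof.
  intros Ha Htail.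
  apply (Rle_cv_lim (Un := fun _ => sum_f_R0 a N) (Vn := fun n => sum_f_R0 a (n + N))).
  - induction n as [|n IH]; [apply Rle_refl|].
    rewrite Nat.add_succ_l, tech5; pose proof (Htail (S (n + N)) ltac:(lia)); lra.
  - apply Un_cv_const.
  - exact (Un_cv_shift _ _ N Ha).
Qed.

Definition hyp0F1_term (c t : R) (n : nat) : R := t ^ n / (poch c n * INR (fact n)).

Lemma poch_gt0 (c : R) (n : nat) : 0 < c -> 0 < poch c n.
Proof.
  intro Hc; induction n as [|n IH]; simpl; [lra|].
  pose proof (pos_INR n); apply Rmult_lt_0_compat; lra.
Qed.

Lemma poch_Sl (c : R) (n : nat) : poch c (S n) = c * poch (c + 1) n.
Proof.
  induction n as [|n IH]; [simpl; ring|].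
  change (poch c (S (S n))) with (poch c (S n) * (c + INR (S n))).
  rewrite IH, S_INR; simpl; ring.
Qed.

Lemma pow_fact_le_poch (c : R) (n : nat) : 0 < c -> Rmin c 1 ^ n * INR (fact n) <= poch c n.
Proof.
  intro Hc; set (m := Rmin c 1).
  assert (Hm : 0 < m <= 1) by (unfold m; split; [apply Rmin_glb_lt|apply Rmin_r]; lra).
  assert (Hmc : m <= c) by apply Rmin_l.
  induction n as [|n IH]; [simpl; lra|].
  rewrite fact_simpl, mult_INR, S_INR; simpl poch.
  pose proof (pos_INR n); pose proof (INR_fact_lt_0 n); pose proof (pow_lt m n (proj1 Hm)).
  replace (m ^ S n * ((INR n + 1) * INR (fact n))) with (m ^ n * INR (fact n) * (m * (INR n + 1)))
    by (simpl; ring).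
  apply Rmult_le_compat; try nra.
Qed.

Lemma Inorm_term_hyp0F1 (mu x : R) (n : nat) :
  Inorm_term mu x n = hyp0F1_term (mu + 1) (x ^ 2 / 4) n.
Proof.
  unfold Inorm_term, hyp0F1_term; rewrite pow_mult; unfold Rdiv.
  rewrite Rpow_mult_distr; ring.
Qed.

Lemma hyp0F1_term_gt0 (c t : R) (n : nat) : 0 < c -> 0 < t -> 0 < hyp0F1_term c t n.
Proof.
  intros Hc Ht; apply Rdiv_lt_0_compat; [now apply pow_lt|].
  apply Rmult_lt_0_compat; [now apply poch_gt0|apply INR_fact_lt_0].
Qed.

Section Terms.
Variables (c t : R).
Hypotheses (Hc : 0 < c) (Ht : 0 < t).

Lemma hyp0F1_term0 : hyp0F1_term c t 0 = 1.
Proof. unfold hyp0F1_term; simpl; field. Qed.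

Lemma hyp0F1_term1 : hyp0F1_term c t 1 = t / c.
Proof. unfold hyp0F1_term; simpl; field; lra. Qed.

Lemma hyp0F1_term_Sparam (n : nat) :
  (c + INR n) * hyp0F1_term (c + 1) t n = c * hyp0F1_term c t n.
Proof.
  unfold hyp0F1_term.
  assert (Hpoch : poch c n * (c + INR n) = c * poch (c + 1) n) by (rewrite <- poch_Sl; reflexivity).
  pose proof (poch_gt0 c n Hc); pose proof (poch_gt0 (c + 1) n ltac:(lra)).
  pose proof (INR_fact_lt_0 n); pose proof (pos_INR n).
  replace (poch (c + 1) n) with (poch c n * (c + INR n) / c) by (rewrite Hpoch; field; lra).
  field; repeat split; lra.
Qed.

Lemma hyp0F1_term_Sparam_le (n : nat) : hyp0F1_term (c + 1) t n <= hyp0F1_term c t n.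
Proof.
  pose proof (hyp0F1_term_Sparam n); pose proof (pos_INR n).
  pose proof (hyp0F1_term_gt0 (c + 1) t n ltac:(lra) Ht).
  assert (0 <= INR n * hyp0F1_term (c + 1) t n) by (apply Rmult_le_pos; lra).
  apply Rmult_le_reg_l with c; nra.
Qed.

Lemma hyp0F1_term_S (n : nat) :
  INR (S n) * hyp0F1_term c t (S n) = t / c * hyp0F1_term (c + 1) t n.
Proof.
  unfold hyp0F1_term; rewrite poch_Sl, fact_simpl, mult_INR.
  pose proof (poch_gt0 (c + 1) n ltac:(lra)); pose proof (INR_fact_lt_0 n); pose proof (pos_INR n).
  rewrite S_INR; simpl; field; repeat split; lra.
Qed.

Lemma hyp0F1_term_S_le (n : nat) : hyp0F1_term c t (S n) <= t / c * hyp0F1_term c t n.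
Proof.
  pose proof (hyp0F1_term_S n); pose proof (hyp0F1_term_Sparam_le n).
  pose proof (hyp0F1_term_gt0 c t (S n) Hc Ht); pose proof (pos_INR n).
  assert (Htc : 0 < t / c) by (apply Rdiv_lt_0_compat; lra).
  rewrite S_INR in *; nra.
Qed.

Lemma hyp0F1_term_contiguous (n : nat) :
  (c + INR (S n)) * (t / c * hyp0F1_term (c + 1) t n + (c + 1) * hyp0F1_term (c + 1) t (S n)
                     - c * hyp0F1_term c t (S n))
  = (INR (S n) ^ 2 + c) * hyp0F1_term c t (S n).
Proof.
  rewrite <- hyp0F1_term_S.
  transitivity ((c + INR (S n)) * INR (S n) * hyp0F1_term c t (S n)
                + (c + 1) * ((c + INR (S n)) * hyp0F1_term (c + 1) t (S n))
                - c * (c + INR (S n)) * hyp0F1_term c t (S n)); [ring|].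
  rewrite hyp0F1_term_Sparam; ring.
Qed.

Lemma hyp0F1_summable : exists S, infinite_sum (hyp0F1_term c t) S.
Proof.
  set (m := Rmin c 1).
  assert (Hm : 0 < m) by (unfold m; apply Rmin_glb_lt; lra).
  destruct (Rseries_CV_comp (hyp0F1_term c t) (fun n => / INR (fact n) * (t / m) ^ n)) as [S HS].
  - intro n; split; [now apply Rlt_le, hyp0F1_term_gt0|].
    replace (/ INR (fact n) * (t / m) ^ n) with (t ^ n / (m ^ n * INR (fact n)))
      by (unfold Rdiv; rewrite Rpow_mult_distr, pow_inv; field; split;
          [apply pow_nonzero; lra | apply INR_fact_neq_0]).
    pose proof (pow_fact_le_poch c n Hc) as Hpoch; fold m in Hpoch.
    pose proof (INR_fact_lt_0 n); pose proof (pow_lt m n Hm); pose proof (poch_gt0 c n Hc).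
    assert (Hfact : 1 <= INR (fact n)) by (apply (le_INR 1), lt_O_fact).
    apply Rmult_le_compat_l; [now apply pow_le, Rlt_le|].
    apply Rinv_le_contravar; [now apply Rmult_lt_0_compat|]; nra.
  - destruct (exist_exp (t / m)) as [l Hl]; exists l; exact Hl.
  - exists S; exact HS.
Qed.

End Terms.

Lemma Inorm_hyp0F1 (mu x : R) : -1 < mu -> 0 < x ->
  infinite_sum (hyp0F1_term (mu + 1) (x ^ 2 / 4)) (Inorm mu x).
Proof.
  intros Hmu Hx; unfold Inorm.
  replace (Inorm_term mu x) with (hyp0F1_term (mu + 1) (x ^ 2 / 4))
    by (extensionality n; symmetry; apply Inorm_term_hyp0F1).
  apply epsilon_spec, hyp0F1_summable; [lra|].
  apply Rdiv_lt_0_compat; [apply pow_lt|]; lra.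
Qed.

Lemma Inorm_hyp0F1_sqrt (mu t : R) : -1 < mu -> 0 < t ->
  infinite_sum (hyp0F1_term (mu + 1) t) (Inorm mu (2 * sqrt t)).
Proof.
  intros Hmu Ht.
  replace t with ((2 * sqrt t) ^ 2 / 4) at 1
    by (rewrite Rpow_mult_distr, pow2_sqrt by lra; field).
  apply Inorm_hyp0F1; [lra|].
  pose proof (sqrt_lt_R0 t Ht); lra.
Qed.

Section Hyp0F1Bounds.
Variables (c t Phi : R).
Hypotheses (Hc : 0 < c) (Ht : 0 < t) (HPhi : infinite_sum (hyp0F1_term c t) Phi).

Lemma hyp0F1_ge : 1 + t / c <= Phi.
Proof.
  pose proof (partial_sum_le_infinite_sum _ _ 1 HPhi
                (fun n _ => Rlt_le _ _ (hyp0F1_term_gt0 c t n Hc Ht))) as Hpartial.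
  simpl in Hpartial; rewrite hyp0F1_term0, hyp0F1_term1 in Hpartial; lra.
Qed.

Lemma hyp0F1_le : Phi <= 1 + t / c * Phi.
Proof.
  pose proof (infinite_sum_plus _ _ _ _ (infinite_sum_cons 1 _ _ (infinite_sum_scal (t / c) _ _ HPhi))
                (infinite_sum_scal (-1) _ _ HPhi)) as Hdiff.
  assert (Htail : forall n, (0 < n)%nat ->
    0 <= (match n with O => 1 | S k => t / c * hyp0F1_term c t k end) + -1 * hyp0F1_term c t n).
  { intros [|n] Hn; [lia|]; pose proof (hyp0F1_term_S_le c t Hc Ht n); lra. }
  pose proof (partial_sum_le_infinite_sum _ _ 0 Hdiff Htail) as Hpartial.
  simpl in Hpartial; rewrite hyp0F1_term0 in Hpartial; lra.
Qed.

End Hyp0F1Bounds.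

Lemma combination_antitone (F G r1 r2 : R) : 0 < F -> 1 <= G -> r1 <= r2 ->
  (1 - r2) * F + r2 * (F / G) <= (1 - r1) * F + r1 * (F / G).
Proof.
  intros HF HG Hr.
  assert (F / G <= F).
  { apply Rmult_le_reg_r with G; [lra|]; unfold Rdiv; rewrite Rmult_assoc, Rinv_l; nra. }
  nra.
Qed.

Section Hyp0F1Pair.
Variables (c t F G : R).
Hypotheses (Hc : 0 < c) (Ht : 0 < t).
Hypotheses (HG : infinite_sum (hyp0F1_term c t) G) (HF : infinite_sum (hyp0F1_term (c + 1) t) F).

Lemma hyp0F1_Sparam_lt : F < G.
Proof.
  pose proof (infinite_sum_plus _ _ _ _ HG (infinite_sum_scal (-1) _ _ HF)) as Hdiff.
  pose proof (partial_sum_le_infinite_sum _ _ 1 Hdiff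
                (fun n _ => ltac:(pose proof (hyp0F1_term_Sparam_le c t Hc Ht n); lra))) as Hpartial.
  simpl in Hpartial.
  rewrite !hyp0F1_term0, hyp0F1_term1, (hyp0F1_term1 (c + 1)) in Hpartial by lra.
  assert (t / (c + 1) < t / c) by (apply Rmult_lt_compat_l; [|apply Rinv_lt_contravar]; nra).
  lra.
Qed.

Lemma hyp0F1_contiguous_gt : t / c * F + (c + 1) * F - c * G > 1 + t / c.
Proof.
  pose proof (infinite_sum_plus _ _ _ _
                (infinite_sum_plus _ _ _ _ (infinite_sum_cons 0 _ _ (infinite_sum_scal (t / c) _ _ HF))
                   (infinite_sum_scal (c + 1) _ _ HF))
                (infinite_sum_scal (- c) _ _ HG)) as Hsum.
  set (T := fun n => (match n with O => 0 | S k => t / c * hyp0F1_term (c + 1) t k end)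
                     + (c + 1) * hyp0F1_term (c + 1) t n + - c * hyp0F1_term c t n) in Hsum.
  assert (HT : forall n, 0 < T (S n)).
  { intro n; pose proof (hyp0F1_term_contiguous c t Hc n) as Hcontig.
    pose proof (hyp0F1_term_gt0 c t (S n) Hc Ht); pose proof (pos_INR (S n)).
    unfold T; apply Rmult_lt_reg_l with (c + INR (S n)); nra. }
  pose proof (partial_sum_le_infinite_sum _ _ 2 Hsum
                (fun n Hn => ltac:(destruct n as [|n]; [lia|]; exact (Rlt_le _ _ (HT n))))) as Hpartial.
  pose proof (HT 1%nat) as HT2.
  assert (HT1 : T 1%nat = t / c).
  { unfold T; rewrite hyp0F1_term0, (hyp0F1_term1 (c + 1)), hyp0F1_term1 by lra; field; lra. }
  assert (HT0 : T 0%nat = 1) by (unfold T; rewrite !hyp0F1_term0; ring).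
  simpl in Hpartial; lra.
Qed.

Let HF_ge : 1 + t / (c + 1) <= F := hyp0F1_ge (c + 1) t F ltac:(lra) Ht HF.
Let HG_ge : 1 + t / c <= G := hyp0F1_ge c t G Hc Ht HG.
Let Htc : 0 < t / c := Rdiv_lt_0_compat t c Ht Hc.
Let Htc1 : 0 < t / (c + 1) := Rdiv_lt_0_compat t (c + 1) Ht ltac:(lra).

Lemma combination_gt1 (p : R) : p <= c / (c + 1) -> (1 - p) * F + p * (F / G) > 1.
Proof.
  intro Hp; pose proof hyp0F1_contiguous_gt as Hcontig.
  apply Rlt_le_trans with ((1 - c / (c + 1)) * F + c / (c + 1) * (F / G));
    [|apply combination_antitone; lra].
  assert (Hkey : 0 < (c + 1) * (F - 1) - c * (G - 1) + (F - 1) * (G - 1)).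
  { assert ((F - 1) * (t / c) <= (F - 1) * (G - 1)) by (apply Rmult_le_compat_l; lra). lra. }
  replace ((1 - c / (c + 1)) * F + c / (c + 1) * (F / G))
    with (1 + ((c + 1) * (F - 1) - c * (G - 1) + (F - 1) * (G - 1)) / ((c + 1) * G)) by (field; lra).
  assert (0 < ((c + 1) * (F - 1) - c * (G - 1) + (F - 1) * (G - 1)) / ((c + 1) * G))
    by (apply Rdiv_lt_0_compat; nra).
  lra.
Qed.

Lemma combination_lt1 (q : R) : q >= 1 -> 1 > (1 - q) * F + q * (F / G).
Proof.
  intro Hq; pose proof hyp0F1_Sparam_lt.
  apply Rle_lt_trans with ((1 - 1) * F + 1 * (F / G)); [apply combination_antitone; lra|].
  replace ((1 - 1) * F + 1 * (F / G)) with (F / G) by ring.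
  apply Rmult_lt_reg_r with G; [lra|]; unfold Rdiv; rewrite Rmult_assoc, Rinv_l; lra.
Qed.

Lemma combination_ge1 (q : R) : q < 1 -> (c + 1) / (1 - q) <= t ->
  1 <= (1 - q) * F + q * (F / G).
Proof.
  intros Hq Ht_large.
  assert (Hinv : 1 / (1 - q) <= t / (c + 1)).
  { replace (1 / (1 - q)) with ((c + 1) / (1 - q) / (c + 1)) by (field; lra).
    apply Rmult_le_compat_r; [apply Rlt_le, Rinv_0_lt_compat|]; lra. }
  destruct (Rle_or_lt q 0) as [Hq0 | Hq0].
  - apply Rle_trans with ((1 - 0) * F + 0 * (F / G)); [|apply combination_antitone; lra].
    assert (0 < 1 / (1 - q)) by (apply Rdiv_lt_0_compat; lra); lra.
  - assert (0 < F / G) by (apply Rdiv_lt_0_compat; lra).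
    assert ((1 - q) * (1 / (1 - q)) = 1) by (field; lra).
    assert ((1 - q) * (1 / (1 - q)) <= (1 - q) * F) by (apply Rmult_le_compat_l; lra).
    nra.
Qed.

Lemma combination_lt1_small (p : R) : 0 < p -> c / ((c + 1) * p) < 1 - t / c ->
  (1 - p) * F + p * (F / G) < 1.
Proof.
  intros Hp Ht_small.
  pose proof (hyp0F1_le c t G Hc Ht HG) as HG_le.
  pose proof (hyp0F1_le (c + 1) t F ltac:(lra) Ht HF) as HF_le.
  assert (HG_small : G / (c + 1) < p / c).
  { assert (c / ((c + 1) * p) * G < 1) by nra.
    replace (G / (c + 1)) with (c / ((c + 1) * p) * G * (p / c)) by (field; lra).
    assert (0 < p / c) by (apply Rdiv_lt_0_compat; lra); nra. }
  assert (Hnum : (F - 1) * G - p * F * (G - 1) < 0).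
  { assert ((F - 1) * G <= t / (c + 1) * F * G) by nra.
    assert (p * F * (t / c) <= p * F * (G - 1)) by (apply Rmult_le_compat_l; nra).
    replace (t / (c + 1) * F * G) with (t * F * (G / (c + 1))) in * by (field; lra).
    replace (p * F * (t / c)) with (t * F * (p / c)) in * by (field; lra).
    assert (t * F * (G / (c + 1)) < t * F * (p / c)) by (apply Rmult_lt_compat_l; nra).
    lra. }
  replace ((1 - p) * F + p * (F / G)) with (1 + ((F - 1) * G - p * F * (G - 1)) / G) by (field; lra).
  assert (((F - 1) * G - p * F * (G - 1)) / G < 0).
  { unfold Rdiv; apply Rmult_neg_pos; [lra|apply Rinv_0_lt_compat; lra]. }
  lra.
Qed.

End Hyp0F1Pair.

Lemma Inorm_combination_lt1 (nu p : R) : -1 < nu -> (nu + 1) / (nu + 2) < p ->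
  exists x, 0 < x /\ (1 - p) * Inorm (nu + 1) x + p * (Inorm (nu + 1) x / Inorm nu x) < 1.
Proof.
  intros Hnu Hp; set (c := nu + 1) in *.
  assert (Hc : 0 < c) by (unfold c; lra).
  replace (nu + 2) with (c + 1) in Hp by (unfold c; ring).
  assert (Hcp : c < (c + 1) * p) by (replace c with (c / (c + 1) * (c + 1)) at 1 by (field; lra); nra).
  assert (Hp_pos : 0 < p) by nra.
  assert (Hr : c / ((c + 1) * p) < 1).
  { apply Rmult_lt_reg_r with ((c + 1) * p); [nra|].
    replace (c / ((c + 1) * p) * ((c + 1) * p)) with c by (field; nra); lra. }
  set (t := c / 2 * (1 - c / ((c + 1) * p))).
  assert (Ht : 0 < t) by (unfold t; apply Rmult_lt_0_compat; lra).
  assert (Ht_small : c / ((c + 1) * p) < 1 - t / c)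
    by (replace (t / c) with ((1 - c / ((c + 1) * p)) / 2) by (unfold t; field; lra); lra).
  exists (2 * sqrt t); split; [pose proof (sqrt_lt_R0 t Ht); lra|].
  exact (combination_lt1_small c t _ _ Hc Ht (Inorm_hyp0F1_sqrt nu t Hnu Ht)
           (Inorm_hyp0F1_sqrt c t ltac:(lra) Ht) p Hp_pos Ht_small).
Qed.

Lemma Inorm_combination_ge1 (nu q : R) : -1 < nu -> q < 1 ->
  exists x, 0 < x /\ 1 <= (1 - q) * Inorm (nu + 1) x + q * (Inorm (nu + 1) x / Inorm nu x).
Proof.
  intros Hnu Hq; set (c := nu + 1).
  assert (Hc : 0 < c) by (unfold c; lra).
  set (t := (c + 1) / (1 - q)).
  assert (Ht : 0 < t) by (unfold t; apply Rdiv_lt_0_compat; lra).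
  exists (2 * sqrt t); split; [pose proof (sqrt_lt_R0 t Ht); lra|].
  exact (combination_ge1 c t _ _ Hc Ht (Inorm_hyp0F1_sqrt nu t Hnu Ht)
           (Inorm_hyp0F1_sqrt c t ltac:(lra) Ht) q Hq (Rle_refl t)).
Qed.

Theorem theorem4p1 (nu p q : R) (hnu : -1 < nu) :
  (forall x : R, 0 < x ->
     (1 - p) * Inorm (nu + 1) x + p * (Inorm (nu + 1) x / Inorm nu x) > 1 /\
     1 > (1 - q) * Inorm (nu + 1) x + q * (Inorm (nu + 1) x / Inorm nu x))
  <-> (p <= (nu + 1) / (nu + 2) /\ q >= 1).
Proof.
  split.
  - intro Hineq; split.
    + apply Rnot_lt_le; intro Hp.
      destruct (Inorm_combination_lt1 nu p hnu Hp) as [x [Hx Hlt]].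
      destruct (Hineq x Hx); lra.
    + apply Rnot_lt_ge; intro Hq.
      destruct (Inorm_combination_ge1 nu q hnu Hq) as [x [Hx Hge]].
      destruct (Hineq x Hx); lra.
  - intros [Hp Hq] x Hx.
    set (t := x ^ 2 / 4).
    assert (Ht : 0 < t) by (apply Rdiv_lt_0_compat; [apply pow_lt|]; lra).
    pose proof (Inorm_hyp0F1 nu x hnu Hx) as HG.
    pose proof (Inorm_hyp0F1 (nu + 1) x ltac:(lra) Hx) as HF.
    replace (nu + 2) with (nu + 1 + 1) in Hp by ring.
    split; [apply (combination_gt1 (nu + 1) t) | apply (combination_lt1 (nu + 1) t)]; auto; lra.
Qed.
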